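(* Under the hypotheses and notation of the setting below (anonymous polymatrix game, arbitrary joint action history $(a_l)_{0\le l\le k}$, beliefs $\hat\pi$ and aggregate beliefs $\hat\mu$ built with the same step sizes), for every $k\ge0$ and agent $i$, the maps $a^i\mapsto\bar R^i(a^i,\hat\mu^i_k)$ and $a^i\mapsto R^i(a^i,\hat\pi^{-i}_k)$ have the same set of maximizers over $\mathbb{A}$. Consequently, any deterministic rule that maps each agent's vector of expected rewards $(\cdot)_{a^i\in\mathbb{A}}$ to an action produces the same joint action $a_{k+1}$ whether applied to $(\bar R^i(\cdot,\hat\mu^i_k))_{i}$ or to $(R^i(\cdot,\hat\pi^{-i}_k))_{i}$.
   Context: Setting: $\mathcal{G}$ is an $N$-player game that is polymatrix ($r^i(a^i,a^{-i})=\sum_{j\neq i}r^{ij}(a^i,a^j)$) and anonymous (common action set $\mathbb{A}$ with $|\mathbb{A}|=n$, rewards invariant under permutations of $a^{-i}$). $\bar r^i:\mathbb{A}\times\mathbb{X}\to\mathbb{R}$ satisfies $r^i(a^i,a^{-i})=\bar r^i(a^i,\sigma(a^{-i}))$, where $\sigma(a^{-i})=\sum_{j\ne i}\mathds{1}\{a^j\}$ and $\mathbb{X}=\{\xi\in\mathbb{N}^n:\sum_l\xi_l=N-1\}$. Given step sizes $(\alpha_k)_{k\ge1}$ and a joint action sequence $(a_l)$: $\hat\pi^j_0=\mathds{1}\{a^j_0\}$, $\hat\pi^j_k=\hat\pi^j_{k-1}+\alpha_k(\mathds{1}\{a^j_k\}-\hat\pi^j_{k-1})$; $\hat\mu^i_0=\mathds{1}\{\sigma(a^{-i}_0)\}$,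 $\hat\mu^i_k=\hat\mu^i_{k-1}+\alpha_k(\mathds{1}\{\sigma(a^{-i}_k)\}-\hat\mu^i_{k-1})$. $R^i(a^i,\pi^{-i})=\sum_{a^{-i}}r^i(a^i,a^{-i})\prod_{j\ne i}\pi^j(a^j)$, $\bar R^i(a^i,\mu)=\sum_{x\in\mathbb{X}}\bar r^i(a^i,x)\mu(x)$. *)

From mathcomp Require Import all_boot all_order all_algebra all_fingroup.
Set Implicit Arguments. Unset Strict Implicit. Unset Printing Implicit Defensive.
Import Order.TTheory GRing.Theory Num.Theory.
Local Open Scope ring_scope.

Section Game.
Variables (R : realFieldType) (A : finType) (N : nat).

Definition profile := {ffun 'I_N -> A}.

(* count vectors xi in N^n; entries are at most N, so they live in 'I_N.+1 *)
Definition cnt := {ffun A -> 'I_N.+1}.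

Definition Xset : {set cnt} := [set x : cnt | (\sum_(b : A) (x b : nat) == N.-1)%N].

Definition sigma (i : 'I_N) (a : profile) : cnt :=
  [ffun b => inord #|[set j : 'I_N | (j != i) && (a j == b)]|].

Definition polymatrix (r : 'I_N -> profile -> R) : Prop :=
  exists rij : 'I_N -> 'I_N -> A -> A -> R,
    forall i (a : profile), r i a = \sum_(j < N | j != i) rij i j (a i) (a j).

Definition anonymous (r : 'I_N -> profile -> R) : Prop :=
  forall i (s : {perm 'I_N}) (a : profile), s i = i ->
    r i [ffun j => a (s j)] = r i a.

Fixpoint pi_hat (alpha : nat -> R) (acts : nat -> profile) (j : 'I_N) (k : nat)
  : A -> R :=
  match k with
  | 0 => fun b => (acts 0%N j == b)%:R
  | k'.+1 => fun b => pi_hat alpha acts j k' b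
       + alpha k * ((acts k j == b)%:R - pi_hat alpha acts j k' b)
  end.

Fixpoint mu_hat (alpha : nat -> R) (acts : nat -> profile) (i : 'I_N) (k : nat)
  : cnt -> R :=
  match k with
  | 0 => fun x => (sigma i (acts 0%N) == x)%:R
  | k'.+1 => fun x => mu_hat alpha acts i k' x
       + alpha k * ((sigma i (acts k) == x)%:R - mu_hat alpha acts i k' x)
  end.

Definition Rexp (r : 'I_N -> profile -> R) (i : 'I_N) (ai : A)
  (pi : 'I_N -> A -> R) : R :=
  \sum_(a : profile | a i == ai) r i a * \prod_(j < N | j != i) pi j (a j).

Definition Rbar (rbar : 'I_N -> A -> cnt -> R) (i : 'I_N) (ai : A)
  (mu : cnt -> R) : R :=
  \sum_(x in Xset) rbar i ai x * mu x.

Definition argmaxes (f : A -> R) : {set A} := [set a | [forall b, f b <= f a]].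

End Game.

From mathcomp Require Import all_boot all_order all_algebra all_fingroup.
From mathcomp Require Import ring.
Import Order.TTheory GRing.Theory Num.Theory.
Local Open Scope ring_scope.
Set Implicit Arguments.
Unset Strict Implicit.

(* In a polymatrix game the expected reward against independent beliefs only
   sees their marginals: R^i(a^i, pi) = sum_{j <> i} sum_b r^{ij}(a^i, b) pi^j(b).
   Through the anonymous representation r^i(a) = rbar^i(a^i, sigma(a^{-i})) the
   same sum is the reward rbar^i(a^i, sigma(a_k^{-i})) of each observed count
   vector, so bar R^i(a^i, mu) is the same affine expression in the beliefs
   pi-hat whenever mu is the aggregate belief.  Since pi-hat and mu-hat follow
   the same affine update rule, induction on k shows that the two expected
   rewards coincide as functions of a^i, hence so do their maximizers and any
   decision rule applied to them. *)

Lemma sum_affine_update (R : pzRingType) (T : finType) (P : pred T) (a : R)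
    (p q : T -> R) :
  \sum_(x | P x) (p x + a * (q x - p x)) =
  \sum_(x | P x) p x + a * (\sum_(x | P x) q x - \sum_(x | P x) p x).
Proof. by rewrite big_split /= -mulr_sumr sumrB. Qed.

Lemma sum_mul_affine_update (R : comPzRingType) (T : finType) (P : pred T)
    (a : R) (w p q : T -> R) :
  \sum_(x | P x) w x * (p x + a * (q x - p x)) =
  \sum_(x | P x) w x * p x
    + a * (\sum_(x | P x) w x * q x - \sum_(x | P x) w x * p x).
Proof. by rewrite -sum_affine_update; apply: eq_bigr => x _; ring. Qed.

Lemma sum_mul_indicator (R : pzRingType) (T : finType) (P : pred T)
    (f : T -> R) (c : T) :
  P c -> \sum_(x | P x) f x * (c == x)%:R = f c.
Proof.
move=> Pc; rewrite (bigD1 c) //= eqxx mulr1 big1 ?addr0 // => x /andP[_].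
by rewrite eq_sym => /negbTE ->; rewrite mulr0.
Qed.

Lemma sum_indicator (R : pzRingType) (T : finType) (c : T) :
  \sum_x (c == x)%:R = 1 :> R.
Proof.
have := @sum_mul_indicator R T predT (fun=> 1) c isT.
by under eq_bigr do rewrite mul1r.
Qed.

Section Beliefs.
Variables (R : realFieldType) (A : finType) (N : nat).
Implicit Types (i j : 'I_N) (a : profile A N).

Lemma pi_hat_sum1 (alpha : nat -> R) (acts : nat -> profile A N) j k :
  \sum_b pi_hat alpha acts j k b = 1.
Proof.
elim: k => [|k IH] /=; first exact: sum_indicator.
by rewrite sum_affine_update IH sum_indicator subrr mulr0 addr0.
Qed.

Lemma card_sigma_lt i a b :
  (#|[set j : 'I_N | (j != i) && (a j == b)]| < N.+1)%N.
Proof. by rewrite ltnS -[N in (_ <= N)%N]card_ord max_card. Qed.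

Lemma sigma_in_Xset i a : sigma i a \in Xset A N.
Proof.
rewrite inE; apply/eqP.
transitivity (\sum_b \sum_(j | j != i) (a j == b : nat))%N.
  apply: eq_bigr => b _; rewrite ffunE inordK ?card_sigma_lt //.
  rewrite -sum1_card big_mkcond [RHS]big_mkcond /=; apply: eq_bigr => j _.
  by rewrite inE; case: (j != i); case: (a j == b).
rewrite exchange_big /=; transitivity (\sum_(j | j != i) 1)%N.
  apply: eq_bigr => j _; rewrite (bigD1 (a j)) //= eqxx big1 // => b.
  by rewrite eq_sym => /negbTE ->.
by rewrite sum1_card cardC1 card_ord.
Qed.

Lemma sigma_set_own i a (ai : A) :
  sigma i [ffun l => if l == i then ai else a l] = sigma i a.
Proof.
apply/ffunP => b; rewrite !ffunE; congr inord; apply: eq_card => j.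
by rewrite !inE ffunE; case: (j =P i).
Qed.

Lemma sum_prod_marginal i j (ai : A) (g : A -> R) (pi : 'I_N -> A -> R) :
  j != i -> (forall l, \sum_b pi l b = 1) ->
  \sum_(a : profile A N | a i == ai) g (a j) * \prod_(l | l != i) pi l (a l)
  = \sum_b g b * pi j b.
Proof.
move=> ji pi_sum1.
(* The constraint a i = ai becomes an indicator factor, so that the sum over
   profiles of a product of coordinatewise factors splits into a product of sums. *)
pose G l b := if l == i then (ai == b)%:R
              else if l == j then g b * pi l b else pi l b.
transitivity (\sum_(a : profile A N) \prod_l G l (a l)).
  rewrite big_mkcond /=; apply: eq_bigr => a _.
  rewrite [in RHS](bigD1 i) //= {1}/G eqxx [ai == _]eq_sym.
  have [_|] := eqVneq (a i) ai; last by rewrite mul0r.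
  rewrite mul1r (bigD1 j) //= [in RHS](bigD1 j) ?ji //= /G (negbTE ji) eqxx.
  rewrite mulrA; congr (_ * _); apply: eq_bigr => l /andP[li lj].
  by rewrite (negbTE li) (negbTE lj).
rewrite -bigA_distr_bigA /= (bigD1 i) //= /G eqxx sum_indicator mul1r.
rewrite (bigD1 j) //= (negbTE ji) eqxx [X in _ * X]big1 ?mulr1 //.
by move=> l /andP[li lj]; rewrite (negbTE li) (negbTE lj).
Qed.

Section Polymatrix.
Variables (r : 'I_N -> profile A N -> R) (rij : 'I_N -> 'I_N -> A -> A -> R).
Hypothesis r_polymatrix :
  forall i a, r i a = \sum_(j | j != i) rij i j (a i) (a j).

Lemma Rexp_polymatrix i (ai : A) (pi : 'I_N -> A -> R) :
  (forall l, \sum_b pi l b = 1) ->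
  Rexp r i ai pi = \sum_(j | j != i) \sum_b rij i j ai b * pi j b.
Proof.
move=> pi_sum1; rewrite /Rexp.
under eq_bigr => a /eqP a_i do rewrite r_polymatrix a_i mulr_suml.
rewrite exchange_big /=; apply: eq_bigr => j ji.
exact: sum_prod_marginal.
Qed.

Variable rbar : 'I_N -> A -> cnt A N -> R.
Hypothesis r_rbar : forall i a, r i a = rbar i (a i) (sigma i a).

Lemma rbar_sigma_polymatrix i (ai : A) a :
  rbar i ai (sigma i a) = \sum_(j | j != i) rij i j ai (a j).
Proof.
pose a' : profile A N := [ffun l => if l == i then ai else a l].
have := r_rbar i a'.
rewrite r_polymatrix sigma_set_own /a' ffunE eqxx => <-.
by apply: eq_bigr => j ji; rewrite ffunE (negbTE ji).
Qed.

Lemma Rbar_mu_hat_polymatrix (alpha : nat -> R) (acts : nat -> profile A N)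
    i (ai : A) k :
  Rbar rbar i ai (mu_hat alpha acts i k)
  = \sum_(j | j != i) \sum_b rij i j ai b * pi_hat alpha acts j k b.
Proof.
have Rbar_indicator m :
    \sum_(x in Xset A N) rbar i ai x * (sigma i (acts m) == x)%:R
    = \sum_(j | j != i) \sum_b rij i j ai b * (acts m j == b)%:R.
  rewrite sum_mul_indicator ?sigma_in_Xset // rbar_sigma_polymatrix.
  by apply: eq_bigr => j _; rewrite sum_mul_indicator.
rewrite /Rbar; elim: k => [|k IH] /=; first exact: Rbar_indicator.
rewrite sum_mul_affine_update IH Rbar_indicator -sum_affine_update.
by apply: eq_bigr => j _; rewrite sum_mul_affine_update.
Qed.

End Polymatrix.
End Beliefs.

Lemma argmaxes_ext (R : realFieldType) (A : finType) (f g : A -> R) :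
  f =1 g -> argmaxes f = argmaxes g.
Proof.
by move=> fg; apply/setP => a; rewrite !inE; under eq_forallb do rewrite !fg.
Qed.

Theorem corollary1 (R : realFieldType) (A : finType) (N : nat)
  (r : 'I_N -> profile A N -> R) (rbar : 'I_N -> A -> cnt A N -> R)
  (alpha : nat -> R) (acts : nat -> profile A N) :
  polymatrix r -> anonymous r ->
  (forall i (a : profile A N), r i a = rbar i (a i) (sigma i a)) ->
  forall k : nat,
    (forall i : 'I_N,
       argmaxes (fun ai => Rbar rbar i ai (mu_hat alpha acts i k))
       = argmaxes (fun ai => Rexp r i ai (pi_hat alpha acts ^~ k)))
    /\
    (forall rule : 'I_N -> {ffun A -> R} -> A,
       [ffun i => rule i [ffun ai => Rbar rbar i ai (mu_hat alpha acts i k)]]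
       = [ffun i => rule i [ffun ai => Rexp r i ai (pi_hat alpha acts ^~ k)]]).
Proof.
move=> [rij r_polymatrix] _ r_rbar k.
have Rbar_eq_Rexp i ai :
    Rbar rbar i ai (mu_hat alpha acts i k) = Rexp r i ai (pi_hat alpha acts ^~ k).
  rewrite (Rbar_mu_hat_polymatrix r_polymatrix r_rbar).
  by rewrite (Rexp_polymatrix r_polymatrix) // => l; apply: pi_hat_sum1.
split=> [i|rule]; first exact: argmaxes_ext.
by apply/ffunP => i; rewrite !ffunE; congr rule; apply/ffunP => ai; rewrite !ffunE.
Qed.
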